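(* Let $A \in \mathbb{Z}_+^{n\times m}$ and $B \in \mathbb{Z}_+^{k \times m}$ be nonnegative integer matrices, both of rank $r$. Suppose that: (i) $A$ and $B$ have the same row space; (ii) for every $x \in \mathbb{R}^m$, $Ax \in \mathbb{Z}^n$ if and only if $Bx \in \mathbb{Z}^k$; (iii) for every $x \in \mathbb{R}^m$, $Ax \geq 0$ (entrywise) if and only if $Bx \geq 0$ (entrywise). Then either $\operatorname{rank}_{\mathbb{Z}_+}(A)=\operatorname{rank}_{\mathbb{Z}_+}(B)=r$, or both $\operatorname{rank}_{\mathbb{Z}_+}(A) > r$ and $\operatorname{rank}_{\mathbb{Z}_+}(B) > r$.
   Context: For a matrix $A \in \mathbb{Z}_+^{n\times m}$, its nonnegative integer rank $\operatorname{rank}_{\mathbb{Z}_+}(A)$ is the smallest integer $k$ such that there exist matrices $B \in \mathbb{Z}_+^{n\times k}$ and $C \in \mathbb{Z}_+^{k\times m}$ with $A = BC$, where $\mathbb{Z}_+$ denotes the nonnegative integers. *)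

From mathcomp Require Import all_boot all_order all_algebra.
From mathcomp Require Import Rstruct.
Set Implicit Arguments. Unset Strict Implicit. Unset Printing Implicit Defensive.
Import Order.TTheory GRing.Theory Num.Theory.
Local Open Scope ring_scope.

Definition zplus_factorizable (n m k : nat) (A : 'M[nat]_(n, m)) : Prop :=
  exists (B : 'M[nat]_(n, k)) (C : 'M[nat]_(k, m)), A = B *m C.

Definition zplus_rank_is (n m : nat) (A : 'M[nat]_(n, m)) (k : nat) : Prop :=
  zplus_factorizable k A /\ forall k', zplus_factorizable k' A -> (k <= k')%N.

Definition natRmx (n m : nat) (A : 'M[nat]_(n, m)) : 'M[Rdefinitions.R]_(n, m) :=
  map_mx (fun a : nat => a%:R) A.

(* If A = U V over Z_+ with inner dimension r = rank A, then V is row free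
   and every row of B lies in its row space, so B = W V for the real matrix
   W = B P, P a right inverse of V.  Column j of P is a vector x with
   A x = U e_j in Z_+^n; the lattice and cone hypotheses turn this into
   B x = W e_j in Z_+^k, so W has entries in Z_+.  Hence A admits a
   factorization of inner dimension r iff B does, and since rank_{Z_+} is
   never below the real rank, this gives the dichotomy. *)

From mathcomp Require Import all_boot all_order all_algebra.
From mathcomp Require Import Rstruct.
From Stdlib Require Import Classical Wf_nat.
Set Implicit Arguments. Unset Strict Implicit.
Import Order.TTheory GRing.Theory Num.Theory.
Local Open Scope ring_scope.

Local Notation R := Rdefinitions.R.

Lemma mulmx_col (S : pzSemiRingType) (p m q : nat)
    (M : 'M[S]_(p, m)) (P : 'M[S]_(m, q)) i j :
  (M *m col j P) i 0 = (M *m P) i j.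
Proof. by rewrite !mxE; apply: eq_bigr => l _; rewrite !mxE. Qed.

Lemma row_free_rank_factor (F : fieldType) (n m r : nat) (A : 'M[F]_(n, m))
    (U : 'M[F]_(n, r)) (V : 'M[F]_(r, m)) :
  \rank A = r -> A = U *m V -> row_free V.
Proof.
move=> rkA eA; rewrite /row_free eqn_leq rank_leq_row /= -{1}rkA eA.
exact: mxrankM_maxr.
Qed.

Lemma submx_row_free_factor (F : fieldType) (p q m : nat)
    (B : 'M[F]_(p, m)) (V : 'M[F]_(q, m)) (P : 'M[F]_(m, q)) :
  V *m P = 1%:M -> (B <= V)%MS -> B = B *m P *m V.
Proof.
move=> VP /submxP[w ->].
by rewrite -[w *m V *m P]mulmxA VP mulmx1.
Qed.

Lemma natRmxM (n p q : nat) (X : 'M[nat]_(n, p)) (Y : 'M[nat]_(p, q)) :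
  natRmx (X *m Y) = natRmx X *m natRmx Y.
Proof.
apply/matrixP=> i j; rewrite !mxE natr_sum; apply: eq_bigr => l _.
by rewrite !mxE natrM.
Qed.

Lemma natRmx_inj (n p : nat) : injective (@natRmx n p).
Proof.
move=> X Y /matrixP eXY; apply/matrixP=> i j.
by have /eqP := eXY i j; rewrite !mxE eqr_nat => /eqP.
Qed.

Lemma natRmxP (n p : nat) (M : 'M[R]_(n, p)) :
  (forall i j, M i j \is a Num.nat) -> exists N, M = natRmx N.
Proof.
move=> Mnat; exists (\matrix_(i, j) Num.truncn (M i j)).
by apply/matrixP=> i j; rewrite !mxE truncnK.
Qed.

Definition int_on {p m : nat} (M : 'M[R]_(p, m)) (x : 'cV[R]_m) :=
  forall i, (M *m x) i 0 \is a Num.int.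

Definition nonneg_on {p m : nat} (M : 'M[R]_(p, m)) (x : 'cV[R]_m) :=
  forall i, 0 <= (M *m x) i 0.

Lemma zplus_factorizable_rank_le (n m k : nat) (A : 'M[nat]_(n, m)) :
  zplus_factorizable k A -> (\rank (natRmx A) <= k)%N.
Proof.
move=> [U [V ->]]; rewrite natRmxM.
exact: leq_trans (mxrankM_maxl _ _) (rank_leq_col _).
Qed.

Lemma zplus_rank_exists (n m : nat) (A : 'M[nat]_(n, m)) :
  exists k, zplus_rank_is A k.
Proof.
have FA : zplus_factorizable n A by exists 1%:M, A; rewrite mul1mx.
have [k [[Fk kmin] _]] :=
  @dec_inh_nat_subset_has_unique_least_element
    (fun k => zplus_factorizable k A) (fun k => classic _) (ex_intro _ n FA).
by exists k; split=> // k' /kmin /ssrnat.leP.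
Qed.

Lemma zplus_rank_is_rank (n m r : nat) (A : 'M[nat]_(n, m)) :
  \rank (natRmx A) = r -> zplus_factorizable r A -> zplus_rank_is A r.
Proof. by move=> <-; split=> // k'; apply: zplus_factorizable_rank_le. Qed.

Lemma zplus_rank_gt_rank (n m r k : nat) (A : 'M[nat]_(n, m)) :
  \rank (natRmx A) = r -> ~ zplus_factorizable r A -> zplus_rank_is A k ->
  (r < k)%N.
Proof.
move=> <- nFA [Fk _]; rewrite ltn_neqAle zplus_factorizable_rank_le // andbT.
by apply/eqP=> ek; rewrite ek in nFA.
Qed.

Lemma zplus_factorizable_transfer (n k m r : nat)
    (A : 'M[nat]_(n, m)) (B : 'M[nat]_(k, m)) :
  \rank (natRmx A) = r ->
  (natRmx B <= natRmx A)%MS ->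
  (forall x, int_on (natRmx A) x -> int_on (natRmx B) x) ->
  (forall x, nonneg_on (natRmx A) x -> nonneg_on (natRmx B) x) ->
  zplus_factorizable r A -> zplus_factorizable r B.
Proof.
move=> rkA sBA intAB nonnegAB [U [V eA]].
have eAR : natRmx A = natRmx U *m natRmx V by rewrite eA natRmxM.
have [P VP] := row_freeP (row_free_rank_factor rkA eAR).
have sBV : (natRmx B <= natRmx V)%MS.
  by rewrite (submx_trans sBA) // eAR submxMl.
have AP_U : natRmx A *m P = natRmx U by rewrite eAR -mulmxA VP mulmx1.
have BP_nat i j : (natRmx B *m P) i j \is a Num.nat.
  have intA : int_on (natRmx A) (col j P).
    by move=> i'; rewrite mulmx_col AP_U mxE natr_int.
  have nonnegA : nonneg_on (natRmx A) (col j P).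
    by move=> i'; rewrite mulmx_col AP_U mxE ler0n.
  rewrite natrEint -!(mulmx_col _ _ i j).
  by rewrite (intAB _ intA) (nonnegAB _ nonnegA).
have [W eW] := natRmxP BP_nat.
exists W, V; apply: natRmx_inj.
by rewrite natRmxM -eW -(submx_row_free_factor VP sBV).
Qed.

Theorem mainTheorem3 (n m k r : nat) (A : 'M[nat]_(n, m)) (B : 'M[nat]_(k, m)) :
  \rank (natRmx A) = r ->
  \rank (natRmx B) = r ->
  (natRmx A == natRmx B)%MS ->
  (forall x : 'cV[Rdefinitions.R]_m,
      (forall i, (natRmx A *m x) i 0 \is a Num.int) <->
      (forall j, (natRmx B *m x) j 0 \is a Num.int)) ->
  (forall x : 'cV[Rdefinitions.R]_m,
      (forall i, 0 <= (natRmx A *m x) i 0) <->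
      (forall j, 0 <= (natRmx B *m x) j 0)) ->
  (zplus_rank_is A r /\ zplus_rank_is B r) \/
  (exists rA rB, zplus_rank_is A rA /\ zplus_rank_is B rB /\ (r < rA)%N /\ (r < rB)%N).
Proof.
move=> rkA rkB /andP[sAB sBA] intAB nonnegAB.
have FA_FB : zplus_factorizable r A -> zplus_factorizable r B.
  apply: zplus_factorizable_transfer rkA sBA _ _ => x.
    by move/intAB.
  by move/nonnegAB.
have FB_FA : zplus_factorizable r B -> zplus_factorizable r A.
  apply: zplus_factorizable_transfer rkB sAB _ _ => x.
    by move/intAB.
  by move/nonnegAB.
have [FA | nFA] := classic (zplus_factorizable r A).
  by left; split; apply: zplus_rank_is_rank => //; apply: FA_FB.
have [rA hA] := zplus_rank_exists A; have [rB hB] := zplus_rank_exists B.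
have gtA := zplus_rank_gt_rank rkA nFA hA.
have gtB : (r < rB)%N by apply: zplus_rank_gt_rank rkB _ hB => /FB_FA.
by right; exists rA, rB.
Qed.
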